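(* \[\sum_{\pi\in\mathcal{C}_1}q^{|\pi|}=\sum_{m\ge0}\frac{q^{\binom{m+1}{2}}}{(q;q)_m}\sum_{j\ge0}q^{\binom{j+1}{2}}{m\brack j}.\]
   Context: An overpartition is a partition in which the first occurrence of each part size may be overlined, with parts listed in non-increasing order with respect to $1<\bar1<2<\bar2<\cdots$. A part is of size $t$ if it is $t$ or $\bar t$, and $|\pi|$ is the sum of the sizes of the parts. $\mathcal{C}_1$ is the set of overpartitions $(\pi_1,\dots,\pi_\ell)$, including the empty one, such that: - for each $1\le i<\ell$, the size of $\pi_i$ minus the size of $\pi_{i+1}$ is at least $1$, and at least $2$ if $\pi_i$ is non-overlined; - no part equals the non-overlined part $1$ (the part $\bar1$ is allowed). $(q;q)_n=\prod_{i=1}^n(1-q^i)$. The Gaussian binomial is ${M\brack N}=\frac{(q;q)_M}{(q;q)_N(q;q)_{M-N}}$ for $0\le N\le M$ and $0$ otherwise. *)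

From mathcomp Require Import all_boot all_algebra.
Set Implicit Arguments. Unset Strict Implicit. Unset Printing Implicit Defensive.
Import GRing.Theory Num.Theory.
Local Open Scope ring_scope.

Definition fps := nat -> rat.

Definition fmul (f g : fps) : fps :=
  fun n => \sum_(i < n.+1) f i * g (n - i)%N.

(* first n+1 coefficients of the multiplicative inverse of f (f 0 <> 0):
   g 0 = 1/f 0,  g n = -(1/f 0) * sum_{i=1}^{n} f i * g (n-i) *)
Fixpoint invl (f : fps) (n : nat) : seq rat :=
  match n with
  | 0 => [:: (f 0%N)^-1]
  | n'.+1 => let s := invl f n' in
      rcons s (- (f 0%N)^-1 * \sum_(i < n'.+1) f i.+1 * nth 0 s (n' - i)%N)
  end.

Definition finv (f : fps) : fps := fun n => nth 0 (invl f n) n.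

Definition fps_of_poly (p : {poly rat}) : fps := fun n => p`_n.

Definition qmono (k : nat) : fps := fun n => if n == k then 1 else 0.

Definition qpoch (n : nat) : fps :=
  fps_of_poly (\prod_(i < n) (1 - 'X^(i.+1) : {poly rat})).

Definition gauss (M N : nat) : fps :=
  if (N <= M)%N then fmul (qpoch M) (finv (fmul (qpoch N) (qpoch (M - N))))
  else fun _ => 0.

(* sum_{j >= 0} q^{binom(j+1,2)} [m brack j]  (terms with j > m vanish) *)
Definition inner_sum (m : nat) : fps :=
  fun k => \sum_(j < m.+1) fmul (qmono 'C(j.+1, 2)) (gauss m j) k.

Definition rhs_term (m : nat) : fps :=
  fmul (qmono 'C(m.+1, 2)) (fmul (finv (qpoch m)) (inner_sum m)).

(* coefficient of q^n of sum_{m >= 0} rhs_term m; terms with m > n have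
   order binom(m+1,2) >= m > n, so only m <= n contribute *)
Definition rhs_coef (n : nat) : rat := \sum_(m < n.+1) rhs_term m n.

(* A part is a pair (t, b): size t, overlined iff b. *)
Definition part := (nat * bool)%type.

(* position in the order 1 < 1bar < 2 < 2bar < ... *)
Definition pkey (x : part) : nat := (2 * x.1 + x.2)%N.

(* consecutive parts: non-increasing, and an overlined part t-bar occurs
   at most once (only the first occurrence of a size may be overlined) *)
Definition orel (x y : part) : bool :=
  (pkey y < pkey x)%N || ((x == y) && ~~ x.2).

Definition is_overpartition (pi : seq part) : bool :=
  all (fun x : part => (0 < x.1)%N) pi && sorted orel pi.

Definition weight (pi : seq part) : nat := sumn (map (fun x : part => x.1) pi).

Definition c1rel (x y : part) : bool :=
  (y.1 + (if x.2 then 1 else 2) <= x.1)%N.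

Definition inC1 (pi : seq part) : bool :=
  [&& is_overpartition pi, sorted c1rel pi & (1%N, false) \notin pi].

From mathcomp Require Import all_boot all_algebra zify ring.
From Stdlib Require Import FunctionalExtensionality.
Set Implicit Arguments. Unset Strict Implicit. Unset Printing Implicit Defensive.
Import GRing.Theory.

(* Read an overpartition of C_1 from its smallest part upwards, preceded by a
   virtual non-overlined part 0: it becomes a chain for the relation
   [c1step], which then also encodes the exclusion of the part 1.  Let
   D_m(q) count the chains with m parts.  A chain with m+1 parts either
   starts with 1bar (remove it, subtract 1 from every other part), or starts
   with 2 (remove it, subtract 2), or neither (subtract 1 from every part);
   these are bijections onto chains with m, m and m+1 parts, whence
     (1 - q^(m+1)) D_(m+1) = (q^(m+1) + q^(2(m+1))) D_m,   D_0 = 1,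
   i.e.  (q;q)_m D_m = q^binom(m+1,2) (-q;q)_m.  The q-binomial theorem
   (-q;q)_m = sum_j q^binom(j+1,2) [m brack j] then identifies D_m with the
   m-th term of the right-hand side. *)

(** * C_1 overpartitions as increasing chains *)

(* [c1step y x]: x may follow y in a C_1 overpartition read increasingly. *)
Definition c1step (y x : part) : bool := c1rel x y.

Definition c1chain (r : seq part) : bool := path c1step (0%N, false) r.

Lemma c1rel_trans : transitive c1rel.
Proof. by move=> [b bb] [a ab] [c cb]; rewrite /c1rel /=; case: ab; case: bb => /=; lia. Qed.

Lemma c1rel_orel x y : c1rel x y -> orel x y.
Proof.
by case: x y => a [] [b d]; rewrite /c1rel /orel /pkey /=; case: d => /= h;
  apply/orP; left; lia.
Qed.

Lemma c1rel_zero x : c1rel x (0%N, false) = (0 < x.1)%N && (x != (1%N, false)).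
Proof. by case: x => [[|[|a]] []]. Qed.

Lemma inC1E pi : inC1 pi = sorted c1rel (rcons pi (0%N, false)).
Proof.
rewrite !sorted_pairwise; try exact: c1rel_trans.
rewrite pairwise_rcons -sorted_pairwise; last exact: c1rel_trans.
rewrite /inC1 /is_overpartition.
have -> : all (c1rel^~ (0%N, false)) pi = all (fun x : part => 0 < x.1)%N pi && ((1%N, false) \notin pi).
  by elim: pi => //= x pi ->; rewrite c1rel_zero inE negb_or andbACA [_ == x]eq_sym.
case s: (sorted c1rel pi); last by rewrite !andbF.
by rewrite (sub_sorted c1rel_orel s) !andbT.
Qed.

Lemma c1chain_rev pi : c1chain (rev pi) = inC1 pi.
Proof.
rewrite inC1E /c1chain; case: pi => [|x p] //=.
by have := rev_path c1step x (rcons p (0%N, false)); rewrite last_rcons belast_rcons.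
Qed.

Lemma weight_rev pi : weight (rev pi) = weight pi.
Proof. by rewrite /weight map_rev sumn_rev. Qed.

Lemma path_c1step_head y y' r : y.1 = y'.1 -> path c1step y r = path c1step y' r.
Proof. by case: r => //= x r; rewrite /c1step /c1rel => ->. Qed.

Lemma path_c1step_gt y r : path c1step y r -> all (fun x : part => y.1 < x.1)%N r.
Proof.
elim: r y => //= x r IH y /andP [yx xr].
have lt_yx : (y.1 < x.1)%N by move: yx; rewrite /c1step /c1rel; case: (x.2) => /=; lia.
rewrite lt_yx /=; apply: sub_all (IH _ xr) => z /=; exact: ltn_trans.
Qed.

Lemma c1chain_size_weight r : c1chain r -> (size r <= weight r)%N.
Proof.
move/path_c1step_gt; elim: r => //= x r IH /andP [x_pos /IH].
by rewrite /weight /=; lia.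
Qed.

Definition shift_part k (x : part) : part := ((x.1 + k)%N, x.2).
Definition unshift_part k (x : part) : part := ((x.1 - k)%N, x.2).
Definition shift k (t : seq part) : seq part := map (shift_part k) t.
Definition unshift k (t : seq part) : seq part := map (unshift_part k) t.

Lemma size_shift k t : size (shift k t) = size t.
Proof. exact: size_map. Qed.

Lemma weight_cons x t : weight (x :: t) = (x.1 + weight t)%N.
Proof. by []. Qed.

Lemma weight_shift k t : weight (shift k t) = (weight t + k * size t)%N.
Proof.
elim: t => [|x t IH]; first by rewrite /= muln0.
by rewrite /shift /= !weight_cons -/(shift k t) IH /=; lia.
Qed.

Lemma shift_inj k : injective (shift k).
Proof. by apply/inj_map => -[a b] [c d] [/addIn -> ->]. Qed.

Lemma path_shift k y t : path c1step (shift_part k y) (shift k t) = path c1step y t.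
Proof. by elim: t y => //= x t IH y; rewrite IH /c1step /c1rel /= addnAC leq_add2r. Qed.

Lemma path_unshift k y r : (k <= y.1)%N -> path c1step y r ->
  exists2 t, path c1step (unshift_part k y) t & r = shift k t.
Proof.
move=> ky yr; have r_ge : all (fun x : part => k <= x.1)%N r.
  by apply: sub_all (path_c1step_gt yr) => x /= /ltnW; exact: leq_trans.
have shiftK : shift k (unshift k r) = r.
  by elim: r r_ge {yr} => //= -[a b] r IH /andP [/= ka /IH ->]; rewrite /shift_part /= subnK.
exists (unshift k r) => //.
rewrite -(path_shift k) shiftK; move: yr; apply: eq_ind.
by case: y ky => a b /= ka; rewrite /shift_part /= subnK.
Qed.

(** * Decomposition of chains by their smallest part *)

Definition hd (r : seq part) : part := head (0%N, false) r.

Definition bar1_cons t : seq part := (1%N, true) :: shift 1 t.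
Definition two_cons t : seq part := (2%N, false) :: shift 2 t.

Lemma bar1_cons_inj : injective bar1_cons.
Proof. by move=> t u [] /shift_inj. Qed.

Lemma two_cons_inj : injective two_cons.
Proof. by move=> t u [] /shift_inj. Qed.

Lemma weight_bar1_cons t : weight (bar1_cons t) = (1 + weight t + size t)%N.
Proof. by rewrite weight_cons weight_shift mul1n addnA. Qed.

Lemma weight_two_cons t : weight (two_cons t) = (2 + weight t + 2 * size t)%N.
Proof. by rewrite weight_cons weight_shift addnA. Qed.

Lemma c1chain_bar1 t : c1chain (bar1_cons t) = c1chain t.
Proof.
rewrite /c1chain /= -[(1%N, true)]/(shift_part 1 (0%N, true)) path_shift.
exact: path_c1step_head.
Qed.

Lemma c1chain_two t : c1chain (two_cons t) = c1chain t.
Proof. by rewrite /c1chain /= -[(2%N, false)]/(shift_part 2 (0%N, false)) path_shift. Qed.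

Lemma c1chain_shift1 t : c1chain t ->
  [&& c1chain (shift 1 t), hd (shift 1 t) != (1%N, true) & hd (shift 1 t) != (2%N, false)].
Proof.
case: t => [|[a b] t] //; rewrite /c1chain /= -/(shift 1 t) => /andP [a_ok t_ok].
rewrite path_shift t_ok /= andbT !xpair_eqE.
by move: a_ok {t_ok}; rewrite /c1step /c1rel /=; case: b => /=; lia.
Qed.

Lemma c1chain_bar1_inv r : c1chain r -> hd r = (1%N, true) ->
  exists2 t, c1chain t & r = bar1_cons t.
Proof.
case: r => // x r; rewrite /c1chain /hd /= => /andP [_ xr] ex; subst x.
have [t t_ok ->] := path_unshift (y := (1%N, true)) (leqnn 1) xr.
by exists t; rewrite // -(path_c1step_head _ (y := (0%N, true))).
Qed.

Lemma c1chain_two_inv r : c1chain r -> hd r = (2%N, false) ->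
  exists2 t, c1chain t & r = two_cons t.
Proof.
case: r => // x r; rewrite /c1chain /hd /= => /andP [_ xr] ex; subst x.
by have [t t_ok ->] := path_unshift (y := (2%N, false)) (leqnn 2) xr; exists t.
Qed.

Lemma c1chain_shift1_inv r : c1chain r -> hd r != (1%N, true) -> hd r != (2%N, false) ->
  exists2 t, c1chain t & r = shift 1 t.
Proof.
move=> r_ok h1 h2; apply: (path_unshift (y := (1%N, false)) (leqnn 1)).
case: r r_ok h1 h2 => // -[a b] r; rewrite /c1chain /hd /= !xpair_eqE => /andP [ab ->].
by move: ab; rewrite andbT /c1step /c1rel /=; case: b => /=; lia.
Qed.

Definition chain_spec (n m : nat) (r : seq part) : bool :=
  [&& c1chain r, weight r == n & size r == m].

(* Enumeration following the decomposition above; [fuel] bounds the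
   recursion depth and is large enough as soon as n < fuel. *)
Fixpoint enum_chains (fuel n m : nat) : seq (seq part) :=
  match fuel, m with
  | 0, _ => [::]
  | _.+1, 0 => if n == 0%N then [:: [::]] else [::]
  | f.+1, m'.+1 =>
      (if (m'.+1 <= n)%N then map (shift 1) (enum_chains f (n - m'.+1) m'.+1) else [::])
      ++ (if (m'.+1 <= n)%N then map bar1_cons (enum_chains f (n - m'.+1) m') else [::])
      ++ (if (2 * m'.+1 <= n)%N then map two_cons (enum_chains f (n - 2 * m'.+1) m') else [::])
  end.

Lemma mem_guarded_map (T : eqType) (b : bool) (g : T -> T) (P Q : pred T) (L : seq T) :
  (b -> forall t, (t \in L) = P t) -> (b -> forall t, P t -> Q (g t)) ->
  (forall r, Q r -> b /\ exists2 t, P t & r = g t) ->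
  forall r, (r \in (if b then map g L else [::])) = Q r.
Proof.
move=> L_P PQ QP r; apply/idP/idP.
  case: b L_P PQ {QP} => // L_P PQ /mapP [t Lt ->].
  by apply: PQ => //; rewrite -L_P.
by case/QP => bT [t Pt ->]; rewrite bT map_f // L_P.
Qed.

Lemma uniq_guarded_map (T : eqType) (b : bool) (g : T -> T) (L : seq T) :
  injective g -> (b -> uniq L) -> uniq (if b then map g L else [::]).
Proof. by case: b => // g_inj /(_ isT); rewrite map_inj_uniq. Qed.

Lemma uniq_cat_disjoint (T : eqType) (s1 s2 : seq T) : uniq s1 -> uniq s2 ->
  (forall x, x \in s1 -> x \notin s2) -> uniq (s1 ++ s2).
Proof. by move=> u1 u2 H; rewrite cat_uniq u1 u2 andbT; apply/hasPn => x; apply: contraL; exact: H. Qed.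

Section Branches.
Variables (n m : nat).

Lemma mem_shift_branch L :
  ((m.+1 <= n)%N -> forall t, (t \in L) = chain_spec (n - m.+1) m.+1 t) ->
  forall r, (r \in (if (m.+1 <= n)%N then map (shift 1) L else [::])) =
    [&& chain_spec n m.+1 r, hd r != (1%N, true) & hd r != (2%N, false)].
Proof.
move=> L_spec; apply: mem_guarded_map L_spec _ _ => [le_mn t | r].
  case/and3P => t_ok /eqP wt /eqP st; rewrite /chain_spec weight_shift size_shift wt st.
  have /and3P [-> -> ->] := c1chain_shift1 t_ok.
  by rewrite eqxx !andbT; apply/eqP; lia.
case/and3P => /and3P [r_ok /eqP wr /eqP sr] h1 h2.
have [t t_ok def_r] := c1chain_shift1_inv r_ok h1 h2.
have := c1chain_size_weight r_ok; move: wr sr; rewrite def_r weight_shift size_shift => wt st le_sw.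
split; first lia; exists t => //.
by rewrite /chain_spec t_ok st eqxx andbT; apply/eqP; lia.
Qed.

Lemma mem_bar1_branch L :
  ((m.+1 <= n)%N -> forall t, (t \in L) = chain_spec (n - m.+1) m t) ->
  forall r, (r \in (if (m.+1 <= n)%N then map bar1_cons L else [::])) =
    chain_spec n m.+1 r && (hd r == (1%N, true)).
Proof.
move=> L_spec; apply: mem_guarded_map L_spec _ _ => [le_mn t | r].
  case/and3P => t_ok /eqP wt /eqP st.
  rewrite /chain_spec c1chain_bar1 weight_bar1_cons /= size_shift wt st t_ok eqxx !andbT.
  by apply/eqP; lia.
case/andP => /and3P [r_ok /eqP wr /eqP sr] /eqP h1.
have [t t_ok def_r] := c1chain_bar1_inv r_ok h1.
move: wr sr; rewrite def_r weight_bar1_cons /= size_shift => wt [st].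
split; first lia; exists t => //.
by rewrite /chain_spec t_ok st eqxx andbT; apply/eqP; lia.
Qed.

Lemma mem_two_branch L :
  ((2 * m.+1 <= n)%N -> forall t, (t \in L) = chain_spec (n - 2 * m.+1) m t) ->
  forall r, (r \in (if (2 * m.+1 <= n)%N then map two_cons L else [::])) =
    chain_spec n m.+1 r && (hd r == (2%N, false)).
Proof.
move=> L_spec; apply: mem_guarded_map L_spec _ _ => [le_mn t | r].
  case/and3P => t_ok /eqP wt /eqP st.
  rewrite /chain_spec c1chain_two weight_two_cons /= size_shift wt st t_ok eqxx !andbT.
  by apply/eqP; lia.
case/andP => /and3P [r_ok /eqP wr /eqP sr] /eqP h2.
have [t t_ok def_r] := c1chain_two_inv r_ok h2.
move: wr sr; rewrite def_r weight_two_cons /= size_shift => wt [st].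
split; first lia; exists t => //.
by rewrite /chain_spec t_ok st eqxx andbT; apply/eqP; lia.
Qed.

End Branches.

Lemma enum_chainsP fuel n m : (n < fuel)%N ->
  uniq (enum_chains fuel n m) /\ forall r, (r \in enum_chains fuel n m) = chain_spec n m r.
Proof.
elim: fuel n m => [//|f IH] n [|m] lt_nf /=.
  split => [|r]; first by case: eqP.
  rewrite /chain_spec; case: r => [|x r] /=; last by rewrite !andbF; case: eqP.
  by rewrite andbT eq_sym; case: eqP.
have IHf k m' : (k < n)%N ->
    uniq (enum_chains f k m') /\ forall r, (r \in enum_chains f k m') = chain_spec k m' r.
  by move=> lt_kn; apply: IH; lia.
have ltA : (m.+1 <= n)%N -> (n - m.+1 < n)%N by lia.
have ltC : (2 * m.+1 <= n)%N -> (n - 2 * m.+1 < n)%N by lia.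
have memA := @mem_shift_branch n m _ (fun h => (IHf _ m.+1 (ltA h)).2).
have memB := @mem_bar1_branch n m _ (fun h => (IHf _ m (ltA h)).2).
have memC := @mem_two_branch n m _ (fun h => (IHf _ m (ltC h)).2).
split.
  apply: uniq_cat_disjoint; [|apply: uniq_cat_disjoint|].
  - exact: uniq_guarded_map (@shift_inj 1) (fun h => (IHf _ _ (ltA h)).1).
  - exact: uniq_guarded_map bar1_cons_inj (fun h => (IHf _ _ (ltA h)).1).
  - exact: uniq_guarded_map two_cons_inj (fun h => (IHf _ _ (ltC h)).1).
  - by move=> r; rewrite memB memC => /andP [_ /eqP ->]; rewrite andbF.
  - by move=> r; rewrite memA mem_cat memB memC => /and3P [_ /negbTE -> /negbTE ->]; rewrite !andbF.
move=> r; rewrite !mem_cat memA memB memC.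
by case: (chain_spec n m.+1 r) => //=; case: eqP; case: eqP.
Qed.

Lemma mem_enum_chains n m r : (r \in enum_chains n.+1 n m) = chain_spec n m r.
Proof. exact: (enum_chainsP m (ltnSn n)).2. Qed.

Lemma uniq_enum_chains n m : uniq (enum_chains n.+1 n m).
Proof. exact: (enum_chainsP m (ltnSn n)).1. Qed.

Definition chain_count (n m : nat) : nat := size (enum_chains n.+1 n m).

Lemma size_enum_chains fuel n m : (n < fuel)%N -> size (enum_chains fuel n m) = chain_count n m.
Proof.
move=> lt_nf; have [uniq_L mem_L] := enum_chainsP m lt_nf.
by apply/perm_size/uniq_perm => // [|r]; rewrite ?uniq_enum_chains // mem_L mem_enum_chains.
Qed.

Lemma chain_count0 n : chain_count n 0 = (n == 0%N).
Proof. by rewrite /chain_count /=; case: (n == 0%N). Qed.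

Lemma chain_countS n m : chain_count n m.+1 =
  ((if (m.+1 <= n)%N then chain_count (n - m.+1) m.+1 + chain_count (n - m.+1) m else 0)
   + (if (2 * m.+1 <= n)%N then chain_count (n - 2 * m.+1) m else 0))%N.
Proof.
rewrite {1}/chain_count /= !size_cat addnA; congr (_ + _)%N.
  by case: ifP => // le_mn; rewrite !size_map; congr (_ + _)%N; apply: size_enum_chains; lia.
by case: ifP => // le_mn; rewrite size_map; apply: size_enum_chains; lia.
Qed.

Definition all_chains (n : nat) : seq (seq part) :=
  flatten [seq enum_chains n.+1 n m | m <- iota 0 n.+1].

Lemma mem_all_chains n r : (r \in all_chains n) = c1chain r && (weight r == n).
Proof.
apply/flatten_mapP/idP => [[m _]|/andP [r_ok /eqP wr]].
  by rewrite mem_enum_chains => /and3P [-> -> _].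
exists (size r); first by rewrite mem_iota /= ltnS -wr c1chain_size_weight.
by rewrite mem_enum_chains /chain_spec r_ok wr !eqxx.
Qed.

Lemma all_chains_uniq n : uniq (all_chains n).
Proof.
rewrite /all_chains; elim: (iota 0 n.+1) (iota_uniq 0 n.+1) => //= m s IH /andP [m_s u_s].
apply: uniq_cat_disjoint (uniq_enum_chains n m) (IH u_s) _ => r.
rewrite mem_enum_chains => /and3P [_ _ /eqP sr].
apply/flatten_mapP => -[m' m'_s]; rewrite mem_enum_chains => /and3P [_ _ /eqP sr'].
by move: m_s; rewrite -sr sr' m'_s.
Qed.

Lemma size_all_chains n : size (all_chains n) = (\sum_(m < n.+1) chain_count n m)%N.
Proof. by rewrite size_flatten /shape -map_comp sumnE big_map -(big_mkord xpredT) /index_iota subn0. Qed.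

(** * Formal power series *)

Local Open Scope ring_scope.

Definition agree (k : nat) (f : fps) (p : {poly rat}) := forall i, (i <= k)%N -> f i = p`_i.

Definition trunc (k : nat) (f : fps) : {poly rat} := \poly_(i < k.+1) f i.

Lemma trunc_agree k f : agree k f (trunc k f).
Proof. by move=> i le_ik; rewrite coef_poly ltnS le_ik. Qed.
Arguments trunc_agree : clear implicits.

Lemma fps_of_poly_agree k p : agree k (fps_of_poly p) p.
Proof. by []. Qed.
Arguments fps_of_poly_agree : clear implicits.

(* Coefficients of a product up to degree k only depend on the factors up
   to degree k, so series identities reduce to polynomial ones. *)
Lemma fmul_agree k f g p r : agree k f p -> agree k g r -> agree k (fmul f g) (p * r).
Proof.
move=> fp gr i le_ik; rewrite /fmul coefM; apply: eq_bigr => j _.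
have le_jk : (j <= k)%N by apply: leq_trans le_ik; rewrite -ltnS.
by rewrite fp // gr // (leq_trans (leq_subr _ _) le_ik).
Qed.

Lemma fmulC f g : fmul f g = fmul g f.
Proof.
apply: functional_extensionality => n.
by rewrite (fmul_agree (trunc_agree n f) (trunc_agree n g)) //
  (fmul_agree (trunc_agree n g) (trunc_agree n f)) // mulrC.
Qed.

Lemma fmulA f g h : fmul (fmul f g) h = fmul f (fmul g h).
Proof.
apply: functional_extensionality => n.
rewrite (fmul_agree (fmul_agree (trunc_agree n f) (trunc_agree n g)) (trunc_agree n h)) //.
by rewrite (fmul_agree (trunc_agree n f) (fmul_agree (trunc_agree n g) (trunc_agree n h))) // mulrA.
Qed.

Lemma fmul_poly p r : fmul (fps_of_poly p) (fps_of_poly r) = fps_of_poly (p * r).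
Proof.
apply: functional_extensionality => n.
by rewrite (fmul_agree (fps_of_poly_agree n p) (fps_of_poly_agree n r)).
Qed.

Lemma qmonoE k : qmono k = fps_of_poly 'X^k.
Proof. by apply: functional_extensionality => n; rewrite /qmono /fps_of_poly coefXn; case: eqP. Qed.

Lemma fmul1s f : fmul (qmono 0) f = f.
Proof.
apply: functional_extensionality => n.
rewrite qmonoE (fmul_agree (fps_of_poly_agree n 'X^0) (trunc_agree n f)) //.
by rewrite expr0 mul1r -trunc_agree.
Qed.

Lemma fmul_Xn k f n : fmul (fps_of_poly 'X^k) f n = if (k <= n)%N then f (n - k)%N else 0.
Proof.
rewrite /fmul /fps_of_poly; case: leqP => le_kn.
  rewrite (bigD1 (Ordinal (leq_ltn_trans le_kn (ltnSn n)))) //= coefXn eqxx mul1r.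
  by rewrite big1 ?addr0 // => i; rewrite -val_eqE /= coefXn => /negbTE ->; rewrite mul0r.
by apply: big1 => i _; rewrite coefXn; case: eqP => [ik|_]; [have := ltn_ord i; lia | rewrite mul0r].
Qed.

Lemma fmul_polyD p r f n :
  fmul (fps_of_poly (p + r)) f n = fmul (fps_of_poly p) f n + fmul (fps_of_poly r) f n.
Proof. by rewrite /fmul -big_split; apply: eq_bigr => i _; rewrite /fps_of_poly coefD mulrDl. Qed.

Lemma fmul_polyB p r f n :
  fmul (fps_of_poly (p - r)) f n = fmul (fps_of_poly p) f n - fmul (fps_of_poly r) f n.
Proof. by rewrite /fmul -sumrB; apply: eq_bigr => i _; rewrite /fps_of_poly coefB mulrBl. Qed.

(* [finv f] is the inverse of [f]: its coefficients do not depend on the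
   length of the computed prefix, and they satisfy the defining recursion. *)
Lemma size_invl f n : size (invl f n) = n.+1.
Proof. by elim: n => //= n IH; rewrite size_rcons IH. Qed.

Lemma finvE f n i : (i <= n)%N -> finv f i = nth 0 (invl f n) i.
Proof.
move=> le_in; rewrite -(subnKC le_in) /finv; elim: (n - i)%N => [|k IH]; first by rewrite addn0.
by rewrite addnS /= nth_rcons size_invl ltnS leq_addr IH.
Qed.

Lemma finvS f n : finv f n.+1 = - (f 0%N)^-1 * \sum_(i < n.+1) f i.+1 * finv f (n - i)%N.
Proof.
rewrite {1}/finv /= nth_rcons size_invl ltnn eqxx; congr (_ * _).
by apply: eq_bigr => i _; rewrite (finvE f (leq_subr i n)).
Qed.

Lemma fmul_finv f : f 0%N != 0 -> fmul f (finv f) = qmono 0.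
Proof.
move=> f0; apply: functional_extensionality => -[|n].
  by rewrite /fmul big_ord1 /finv /= mulfV.
rewrite /fmul big_ord_recl subn0 finvS mulrA mulrN mulfV // mulN1r.
under [X in _ + X]eq_bigr => i _ do rewrite lift0 subSS.
by rewrite addNr.
Qed.

Lemma finv_unique f g h : f 0%N != 0 -> fmul f h = g -> h = fmul (finv f) g.
Proof. by move=> f0 <-; rewrite -fmulA (fmulC (finv f)) fmul_finv // fmul1s. Qed.

(** * q-Pochhammer symbols, Gaussian polynomials and the q-binomial theorem *)

Section QPolynomials.
Context {R : comNzRingType}.

Definition qpoly (n : nat) : {poly R} := \prod_(i < n) (1 - 'X^(i.+1)).
Definition negqpoly (n : nat) : {poly R} := \prod_(i < n) (1 + 'X^(i.+1)).

(* Gaussian polynomials, defined by the q-Pascal recursion. *)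
Fixpoint gpoly (m j : nat) : {poly R} :=
  match m, j with
  | 0, 0 => 1
  | 0, _.+1 => 0
  | _.+1, 0 => 1
  | m'.+1, j'.+1 => 'X^(m' - j') * gpoly m' j' + gpoly m' j'.+1
  end.

Lemma qpolyS n : qpoly n.+1 = qpoly n * (1 - 'X^(n.+1)).
Proof. by rewrite /qpoly big_ord_recr. Qed.

Lemma negqpolyS n : negqpoly n.+1 = negqpoly n * (1 + 'X^(n.+1)).
Proof. by rewrite /negqpoly big_ord_recr. Qed.

Lemma qpoly0 : qpoly 0 = 1. Proof. by rewrite /qpoly big_ord0. Qed.
Lemma negqpoly0 : negqpoly 0 = 1. Proof. by rewrite /negqpoly big_ord0. Qed.

Lemma qpoly_coef0 n : (qpoly n)`_0 = 1.
Proof.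
elim: n => [|n IH]; first by rewrite qpoly0 coefC.
by rewrite qpolyS coef0M IH coefB coef1 coefXn mul1r subr0.
Qed.

Lemma gpoly_gt m j : (m < j)%N -> gpoly m j = 0.
Proof. by elim: m j => [|m IH] [|j] //= lt_mj; rewrite !IH ?mulr0 ?addr0 // ltnW. Qed.

Lemma gpoly_m0 m : gpoly m 0 = 1.
Proof. by case: m. Qed.

Lemma gpoly_qpoly m j : (j <= m)%N -> gpoly m j * qpoly j * qpoly (m - j) = qpoly m.
Proof.
elim: m j => [|m IH] [|j] //= le_jm; rewrite ?qpoly0 ?subn0 ?mul1r // subSS.
have [lt_jm | ge_jm] := ltnP j m; last first.
  have -> : j = m by lia.
  rewrite (gpoly_gt (ltnSn m)) addr0 subnn expr0 mul1r qpoly0 mulr1 qpolyS mulrA.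
  by have := IH m (leqnn m); rewrite subnn qpoly0 mulr1 => ->.
have qpoly_mj : qpoly (m - j) = qpoly (m - j.+1) * (1 - 'X^(m - j)).
  have -> : (m - j = (m - j.+1).+1)%N by lia.
  by rewrite qpolyS.
have -> : ('X^(m - j) * gpoly m j + gpoly m j.+1) * qpoly j.+1 * qpoly (m - j)
    = 'X^(m - j) * (1 - 'X^(j.+1)) * (gpoly m j * qpoly j * qpoly (m - j))
      + (1 - 'X^(m - j)) * (gpoly m j.+1 * qpoly j.+1 * qpoly (m - j.+1)).
  by rewrite qpolyS qpoly_mj; ring.
rewrite (IH j (ltnW lt_jm)) (IH j.+1 lt_jm) qpolyS.
have <- : 'X^(m - j) * 'X^(j.+1) = 'X^(m.+1) :> {poly R} by rewrite -exprD; congr (_ ^+ _); lia.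
ring.
Qed.

Lemma q_binomial m : \sum_(j < m.+1) 'X^('C(j.+1, 2)) * gpoly m j = negqpoly m.
Proof.
elim: m => [|m IH]; first by rewrite big_ord1 /= mulr1 negqpoly0.
have sum_low : \sum_(j < m.+1) 'X^('C(j.+2, 2)) * ('X^(m - j) * gpoly m j) = 'X^(m.+1) * negqpoly m.
  rewrite -IH mulr_sumr; apply: eq_bigr => j _.
  rewrite !mulrA -!exprD; congr (_ ^+ _ * _).
  by rewrite !binS bin1 bin0; have := ltn_ord j; lia.
have sum_high : 1 + \sum_(j < m.+1) 'X^('C(j.+2, 2)) * gpoly m j.+1 = negqpoly m.
  rewrite -IH [in RHS]big_ord_recl gpoly_m0 bin_small // expr0 mulr1; congr (_ + _).
  rewrite [in LHS]big_ord_recr /= (gpoly_gt (ltnSn m)) mulr0 addr0.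
  by apply: eq_bigr => j _.
rewrite big_ord_recl bin_small // expr0 gpoly_m0 mulr1.
under eq_bigr => j _ do rewrite lift0 /= mulrDr.
by rewrite big_split /= sum_low negqpolyS -sum_high; ring.
Qed.

End QPolynomials.

(* The series are the polynomials above; in particular the inner
   sum is (-q;q)_m by the q-binomial theorem. *)
Lemma qpochE m : qpoch m = fps_of_poly (qpoly m).
Proof. by []. Qed.

Lemma qpoch_coef0_neq0 m : fps_of_poly (qpoly m) 0%N != 0.
Proof. by rewrite /fps_of_poly qpoly_coef0 oner_neq0. Qed.

Lemma gaussE m j : (j <= m)%N -> gauss m j = fps_of_poly (gpoly m j).
Proof.
move=> le_jm; rewrite /gauss le_jm !qpochE (fmul_poly (qpoly j)) -{1}(gpoly_qpoly le_jm) -mulrA.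
rewrite -(fmul_poly (gpoly m j)) fmulA fmul_finv ?(fmulC (fps_of_poly _)) ?fmul1s //.
by rewrite /fps_of_poly coef0M !qpoly_coef0 mul1r oner_neq0.
Qed.

Lemma inner_sumE m : inner_sum m = fps_of_poly (negqpoly m).
Proof.
apply: functional_extensionality => k.
rewrite /inner_sum -q_binomial /fps_of_poly coef_sum; apply: eq_bigr => j _.
by rewrite gaussE ?qmonoE ?fmul_poly // -ltnS.
Qed.

Lemma rhs_termE m :
  rhs_term m = fmul (finv (fps_of_poly (qpoly m))) (fps_of_poly ('X^('C(m.+1, 2)) * negqpoly m)).
Proof.
rewrite /rhs_term inner_sumE qmonoE -qpochE -fmul_poly.
by rewrite fmulC fmulA (fmulC (fps_of_poly (negqpoly m))).
Qed.

(** * Generating functions of chains *)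

Definition chain_gf (m : nat) : fps := fun n => (chain_count n m)%:R.

Lemma chain_gf_rec m : fmul (fps_of_poly (1 - 'X^(m.+1))) (chain_gf m.+1)
  = fmul (fps_of_poly ('X^(m.+1) + 'X^(2 * m.+1))) (chain_gf m).
Proof.
apply: functional_extensionality => n.
rewrite fmul_polyB fmul_polyD -(expr0 'X) !fmul_Xn subn0 /chain_gf chain_countS leq0n.
case: (leqP m.+1 n) => h1; case: (leqP (2 * m.+1) n) => h2 //; rewrite ?natrD ?addr0 ?subr0;
  try ring; lia.
Qed.

Lemma chain_gf_closed m :
  fmul (fps_of_poly (qpoly m)) (chain_gf m) = fps_of_poly ('X^('C(m.+1, 2)) * negqpoly m).
Proof.
elim: m => [|m IH].
  rewrite qpoly0 negqpoly0 bin_small // expr0 mulr1; apply: functional_extensionality => n.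
  by rewrite -(expr0 'X) fmul_Xn subn0 /chain_gf chain_count0 /fps_of_poly coefXn.
rewrite qpolyS -fmul_poly fmulA chain_gf_rec fmulC fmulA (fmulC (chain_gf m)) IH fmul_poly.
have -> : 'C(m.+2, 2) = ('C(m.+1, 2) + m.+1)%N by rewrite binS bin1 addnC.
congr fps_of_poly; rewrite negqpolyS exprD.
have -> : 'X^(2 * m.+1) = 'X^(m.+1) * 'X^(m.+1) :> {poly rat} by rewrite -exprD; congr (_ ^+ _); lia.
ring.
Qed.

Lemma chain_gf_rhs m : chain_gf m = rhs_term m.
Proof. by rewrite rhs_termE; apply: finv_unique (qpoch_coef0_neq0 m) (chain_gf_closed m). Qed.

(* Reversal maps the chains of weight n bijectively onto the C_1
   overpartitions of n, and there are sum_m D_m(n) of them. *)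
Theorem mainTheorem19 (n : nat) :
  exists s : seq (seq part),
    [/\ uniq s,
        forall pi : seq part, (pi \in s) = inC1 pi && (weight pi == n)
      & (size s)%:R = rhs_coef n].
Proof.
exists (map rev (all_chains n)); split.
- by rewrite (map_inj_uniq (can_inj revK)) all_chains_uniq.
- by move=> pi; rewrite -{1}(revK pi) (mem_map (can_inj revK)) mem_all_chains c1chain_rev weight_rev.
- rewrite size_map size_all_chains natr_sum; apply: eq_bigr => m _.
  by rewrite -chain_gf_rhs.
Qed.
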